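(* Let $N>0$, $m>0$, $F>0$, $\alpha>0$, $w>0$ be fixed with $Nm>\alpha$, and for $g\geq 0$, $\tau\in(0,1)$, $L_g\geq 0$ define \[ L=\frac{N\left[(1-\tau)(mL_g+\alpha F)+(mg+F)mN\right]}{\alpha+(Nm-\alpha)\tau},\qquad p=\frac{L+L_g}{L+L_g-\alpha g}\left(mw+\frac{\alpha(1-\tau)w}{N}\right), \] regarded as functions of $(g,\tau,L_g)$. Then \[ \frac{\partial p}{\partial g}>0,\qquad \frac{\partial p}{\partial \tau}<0,\qquad \frac{\partial p}{\partial L_g}\leq 0 . \]
   Context: $L$ is equilibrium private employment and $p$ the equilibrium price of every variety in a monopolistic-competition general equilibrium model with a measure $N$ of firms, marginal and fixed labor inputs $m$ and $F$, CARA utility parameter $\alpha$, nominal wage $w$, income tax rate $\tau$, government purchase $g$ of each variety, and government employment $L_g$. Equivalently $p=mw(L+L_g)/(L+L_g-\alpha((L+L_g)q+g))$ with $q=(1-\tau)(L+L_g-\alpha g)/((Nm+\alpha(1-\tau))(L+L_g))$. Partial derivatives are taken in $(g,\tau,L_g)$ with other parameters fixed. *)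

From Stdlib Require Import Reals.
From Coquelicot Require Import Coquelicot.
Open Scope R_scope.

Definition Lemp (N m F alpha : R) (g tau Lg : R) : R :=
  N * ((1 - tau) * (m * Lg + alpha * F) + (m * g + F) * m * N)
    / (alpha + (N * m - alpha) * tau).

Definition price (N m F alpha w : R) (g tau Lg : R) : R :=
  let L := Lemp N m F alpha g tau Lg in
  (L + Lg) / (L + Lg - alpha * g) * (m * w + alpha * (1 - tau) * w / N).

(** Since [Lemp + Lg - alpha g = (N m + alpha (1 - tau)) Q / D] with
    [D = alpha + (N m - alpha) tau] and [Q = Lg + N F + (N m - alpha) g], and the
    markup factor equals [w (N m + alpha (1 - tau)) / N], the price collapses to
    [p = w (N m + alpha (1 - tau)) / N + (w alpha / N) g D / Q].
    This is affine in [tau] with slope [-(w alpha / N) (Lg + N F) / Q], a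
    fractional-linear function of [g] increasing because [Q] is positive at
    [g = 0], and nonincreasing in [Lg] because [Q] grows with [Lg]. *)
From Stdlib Require Import Reals Lra Psatz.
From Coquelicot Require Import Coquelicot.
Open Scope R_scope.

Definition Lemp_den (N m alpha tau : R) : R := alpha + (N * m - alpha) * tau.

Definition price_den (N m F alpha g Lg : R) : R := Lg + N * F + (N * m - alpha) * g.

Definition price_closed (N m F alpha w g tau Lg : R) : R :=
  w / N * (N * m + alpha * (1 - tau))
  + w * alpha / N * (g * Lemp_den N m alpha tau / price_den N m F alpha g Lg).

Lemma locally_pos_of_ex_derive (f : R -> R) (x : R) :
  ex_derive f x -> 0 < f x -> locally x (fun y => 0 < f y).
Proof.
  intros Hd Hpos.
  apply (ex_derive_continuous f x Hd).
  now apply open_gt.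
Qed.

Lemma ex_derive_Derive_loc (f h : R -> R) (x l : R) :
  locally x (fun y => h y = f y) -> is_derive h x l ->
  ex_derive f x /\ Derive f x = l.
Proof.
  intros Hloc Hd.
  assert (Hf : is_derive f x l) by exact (is_derive_ext_loc h f x l Hloc Hd).
  split; [now exists l | exact (is_derive_unique f x l Hf)].
Qed.

Section Price.

Variables (N m F alpha w : R).
Hypothesis HN : N <> 0.

Lemma Lemp_add_sub_alpha_g (g tau Lg : R) :
  Lemp_den N m alpha tau <> 0 ->
  Lemp N m F alpha g tau Lg + Lg - alpha * g
  = (N * m + alpha * (1 - tau)) * price_den N m F alpha g Lg / Lemp_den N m alpha tau.
Proof.
  intros HD. unfold Lemp, Lemp_den, price_den in *. field. exact HD.
Qed.

Lemma price_eq_closed (g tau Lg : R) :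
  Lemp_den N m alpha tau <> 0 -> N * m + alpha * (1 - tau) <> 0 ->
  price_den N m F alpha g Lg <> 0 ->
  price N m F alpha w g tau Lg = price_closed N m F alpha w g tau Lg.
Proof.
  intros HD HC HQ.
  assert (HCQ : (N * m + alpha * (1 - tau)) * price_den N m F alpha g Lg <> 0)
    by now apply Rmult_integral_contrapositive_currified.
  unfold price, price_closed. cbv zeta.
  replace (Lemp N m F alpha g tau Lg + Lg)
    with ((Lemp N m F alpha g tau Lg + Lg - alpha * g) + alpha * g) by ring.
  rewrite Lemp_add_sub_alpha_g by exact HD.
  field. repeat split; try assumption.
  intro E. apply HCQ. lra.
Qed.

Lemma is_derive_price_closed_g (g tau Lg : R) :
  price_den N m F alpha g Lg <> 0 ->
  is_derive (fun g' => price_closed N m F alpha w g' tau Lg) g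
    (w * alpha / N * (Lemp_den N m alpha tau * (Lg + N * F))
     / price_den N m F alpha g Lg ^ 2).
Proof.
  intros HQ. unfold price_closed, price_den in *.
  auto_derive; [auto |]. field. split; assumption.
Qed.

Lemma is_derive_price_closed_tau (g tau Lg : R) :
  price_den N m F alpha g Lg <> 0 ->
  is_derive (fun t' => price_closed N m F alpha w g t' Lg) tau
    (- (w * alpha / N * (Lg + N * F) / price_den N m F alpha g Lg)).
Proof.
  intros HQ. unfold price_closed, Lemp_den, price_den in *.
  auto_derive; [auto |]. field. split; assumption.
Qed.

Lemma is_derive_price_closed_Lg (g tau Lg : R) :
  price_den N m F alpha g Lg <> 0 ->
  is_derive (fun l' => price_closed N m F alpha w g tau l') Lg
    (- (w * alpha / N * (g * Lemp_den N m alpha tau) / price_den N m F alpha g Lg ^ 2)).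
Proof.
  intros HQ. unfold price_closed, price_den in *.
  auto_derive; [auto |]. field. split; assumption.
Qed.

Lemma Derive_price_g (g tau Lg : R) :
  Lemp_den N m alpha tau <> 0 -> N * m + alpha * (1 - tau) <> 0 ->
  0 < price_den N m F alpha g Lg ->
  ex_derive (fun g' => price N m F alpha w g' tau Lg) g /\
  Derive (fun g' => price N m F alpha w g' tau Lg) g
  = w * alpha / N * (Lemp_den N m alpha tau * (Lg + N * F))
    / price_den N m F alpha g Lg ^ 2.
Proof.
  intros HD HC HQ.
  assert (HQloc : locally g (fun g' => 0 < price_den N m F alpha g' Lg)).
  { apply locally_pos_of_ex_derive; [unfold price_den; auto_derive; auto | exact HQ]. }
  apply (ex_derive_Derive_loc _ (fun g' => price_closed N m F alpha w g' tau Lg)).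
  - apply filter_imp with (2 := HQloc). intros g' HQ'.
    symmetry. apply price_eq_closed; [exact HD | exact HC | apply Rgt_not_eq, HQ'].
  - apply is_derive_price_closed_g, Rgt_not_eq, HQ.
Qed.

Lemma Derive_price_tau (g tau Lg : R) :
  0 < Lemp_den N m alpha tau -> 0 < N * m + alpha * (1 - tau) ->
  price_den N m F alpha g Lg <> 0 ->
  ex_derive (fun t' => price N m F alpha w g t' Lg) tau /\
  Derive (fun t' => price N m F alpha w g t' Lg) tau
  = - (w * alpha / N * (Lg + N * F) / price_den N m F alpha g Lg).
Proof.
  intros HD HC HQ.
  assert (HDloc : locally tau (fun t' => 0 < Lemp_den N m alpha t')).
  { apply locally_pos_of_ex_derive; [unfold Lemp_den; auto_derive; auto | exact HD]. }
  assert (HCloc : locally tau (fun t' => 0 < N * m + alpha * (1 - t'))).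
  { apply locally_pos_of_ex_derive; [auto_derive; auto | exact HC]. }
  apply (ex_derive_Derive_loc _ (fun t' => price_closed N m F alpha w g t' Lg)).
  - apply filter_imp with (2 := filter_and _ _ HDloc HCloc). intros t' [HD' HC'].
    symmetry. apply price_eq_closed; [apply Rgt_not_eq, HD' | apply Rgt_not_eq, HC' | exact HQ].
  - apply is_derive_price_closed_tau, HQ.
Qed.

Lemma Derive_price_Lg (g tau Lg : R) :
  Lemp_den N m alpha tau <> 0 -> N * m + alpha * (1 - tau) <> 0 ->
  0 < price_den N m F alpha g Lg ->
  ex_derive (fun l' => price N m F alpha w g tau l') Lg /\
  Derive (fun l' => price N m F alpha w g tau l') Lg
  = - (w * alpha / N * (g * Lemp_den N m alpha tau) / price_den N m F alpha g Lg ^ 2).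
Proof.
  intros HD HC HQ.
  assert (HQloc : locally Lg (fun l' => 0 < price_den N m F alpha g l')).
  { apply locally_pos_of_ex_derive; [unfold price_den; auto_derive; auto | exact HQ]. }
  apply (ex_derive_Derive_loc _ (fun l' => price_closed N m F alpha w g tau l')).
  - apply filter_imp with (2 := HQloc). intros l' HQ'.
    symmetry. apply price_eq_closed; [exact HD | exact HC | apply Rgt_not_eq, HQ'].
  - apply is_derive_price_closed_Lg, Rgt_not_eq, HQ.
Qed.

End Price.

Theorem theorem3 (N m F alpha w : R)
  (HN : 0 < N) (Hm : 0 < m) (HF : 0 < F) (Ha : 0 < alpha) (Hw : 0 < w)
  (HNm : N * m > alpha)
  (g tau Lg : R) (Hg : 0 <= g) (Ht0 : 0 < tau) (Ht1 : tau < 1) (HLg : 0 <= Lg) :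
  (ex_derive (fun g' => price N m F alpha w g' tau Lg) g /\
   Derive (fun g' => price N m F alpha w g' tau Lg) g > 0) /\
  (ex_derive (fun t' => price N m F alpha w g t' Lg) tau /\
   Derive (fun t' => price N m F alpha w g t' Lg) tau < 0) /\
  (ex_derive (fun l' => price N m F alpha w g tau l') Lg /\
   Derive (fun l' => price N m F alpha w g tau l') Lg <= 0).
Proof.
  assert (HN0 : N <> 0) by lra.
  assert (HD : 0 < Lemp_den N m alpha tau) by (unfold Lemp_den; nra).
  assert (HC : 0 < N * m + alpha * (1 - tau)) by nra.
  assert (HLgF : 0 < Lg + N * F) by nra.
  assert (HQ : 0 < price_den N m F alpha g Lg) by (unfold price_den; nra).
  assert (Hwa : 0 < w * alpha / N) by (apply Rdiv_lt_0_compat; nra).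
  destruct (Derive_price_g N m F alpha w HN0 g tau Lg) as [Hexg ->]; try lra.
  destruct (Derive_price_tau N m F alpha w HN0 g tau Lg) as [Hext ->]; try lra.
  destruct (Derive_price_Lg N m F alpha w HN0 g tau Lg) as [Hexl ->]; try lra.
  assert (0 < price_den N m F alpha g Lg ^ 2) by (apply pow_lt, HQ).
  split; [| split]; split; try assumption.
  - apply Rdiv_lt_0_compat; [apply Rmult_lt_0_compat; nra | assumption].
  - enough (0 < w * alpha / N * (Lg + N * F) / price_den N m F alpha g Lg) by lra.
    apply Rdiv_lt_0_compat; [apply Rmult_lt_0_compat |]; assumption.
  - enough (0 <= w * alpha / N * (g * Lemp_den N m alpha tau) / price_den N m F alpha g Lg ^ 2)
      by lra.
    apply Rdiv_le_0_compat; [apply Rmult_le_pos; nra | assumption].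
Qed.
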